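(* For a nonzero nondegenerate m-triangle $\mathbf X$ with moment of inertia $I$, the following are equivalent: (a) its shape is a pole of the shape sphere, i.e. $m_j|\mathbf a_j|^2=\frac12(1-m_j)I$ for $j=1,2,3$; (b) $\lambda_1=\lambda_2$; (c) its area equals $\Delta_{\max}=\frac{I}{4\sqrt{m_1m_2m_3}}$, which is the maximal area among all m-triangles with the same moment of inertia $I$. In particular, the poles are the shapes uniquely characterized by (b) or (c).
   Context: Masses $m_1,m_2,m_3>0$, $m_1+m_2+m_3=1$; m-triangle $\mathbf X=(\mathbf a_1,\mathbf a_2,\mathbf a_3)$, $\mathbf a_i\in\mathbb R^3$, $\sum m_i\mathbf a_i=0$; $I=\sum m_i|\mathbf a_i|^2$; $\Delta$ is its area; $\lambda_1\le\lambda_2$ are the two smallest eigenvalues of the inertia tensor $B_{\mathbf X}(\mathbf u,\mathbf v)=\sum m_j(\mathbf u\times\mathbf a_j)\cdot(\mathbf v\times\mathbf a_j)$. The poles of the shape sphere (oriented m-triangles of size $I=1$ modulo rotation) are the shapes of the positively or negatively oriented m-triangles with $m_j|\mathbf a_j|^2=(1-m_j)/2$. *)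

From HB Require Import structures.
From mathcomp Require Import all_boot all_order all_algebra.
Set Implicit Arguments. Unset Strict Implicit. Unset Printing Implicit Defensive.
Import Order.TTheory GRing.Theory Num.Theory.
Local Open Scope ring_scope.

Section Defs.
Variable R : rcfType.

Definition dot (u v : 'rV[R]_3) : R := \sum_(i < 3) u 0 i * v 0 i.
Definition vnorm (u : 'rV[R]_3) : R := Num.sqrt (dot u u).
Definition cross (u v : 'rV[R]_3) : 'rV[R]_3 :=
  \row_(k < 3)
    (if k == 0 :> nat then u 0 1 * v 0 2%:R - u 0 2%:R * v 0 1
     else if k == 1 :> nat then u 0 2%:R * v 0 0 - u 0 0 * v 0 2%:R
     else u 0 0 * v 0 1 - u 0 1 * v 0 0).

Definition evec (i : 'I_3) : 'rV[R]_3 := delta_mx 0 i.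

(* an m-triangle: three points a : 'I_3 -> R^3 with centre of mass at 0 *)
Definition centered (m : 'I_3 -> R) (a : 'I_3 -> 'rV[R]_3) : Prop :=
  \sum_(j < 3) m j *: a j = 0.

Definition inertia (m : 'I_3 -> R) (a : 'I_3 -> 'rV[R]_3) : R :=
  \sum_(j < 3) m j * dot (a j) (a j).

Definition area (a : 'I_3 -> 'rV[R]_3) : R :=
  vnorm (cross (a 1 - a 0) (a 2%:R - a 0)) / 2.

Definition inertia_tensor (m : 'I_3 -> R) (a : 'I_3 -> 'rV[R]_3) : 'M[R]_3 :=
  \matrix_(i < 3, k < 3)
     \sum_(j < 3) m j * dot (cross (evec i) (a j)) (cross (evec k) (a j)).

Definition sorted_eigenvalues (B : 'M[R]_3) (s : seq R) : Prop :=
  sorted <=%R s /\ char_poly B = \prod_(x <- s) ('X - x%:P).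

End Defs.

(* In the Jacobi coordinates x = a1 - a0 and y = a2 - (m0 a0 + m1 a1)/(m0 + m1) of an
   m-triangle, I = mu1 |x|^2 + mu2 |y|^2 with mu1 mu2 = m0 m1 m2, and 2 Delta = |x × y|.
   The inertia tensor is I Id - (mu1 x x^T + mu2 y y^T): its eigenvalues are I and the roots
   lambda1 <= lambda2 of X^2 - I X + 4 m0 m1 m2 Delta^2, so lambda1 = lambda2 exactly when
   I^2 = 16 m0 m1 m2 Delta^2, i.e. when Delta = Delta_max.  By Lagrange's identity
     I^2 - 16 m0 m1 m2 Delta^2 = (mu1 |x|^2 - mu2 |y|^2)^2 + 4 mu1 mu2 (x.y)^2 >= 0,
   which proves the maximality of Delta_max.  Finally the pole conditions are linear in
   |x|^2, |y|^2 and x.y, and amount to mu1 |x|^2 = mu2 |y|^2 and x.y = 0, that is, to the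
   vanishing of this sum of squares. *)

From HB Require Import structures.
From mathcomp Require Import all_boot all_order all_algebra.
From mathcomp Require Import ring lra.
Import Order.TTheory GRing.Theory Num.Theory.
Set Implicit Arguments.
Unset Strict Implicit.
Unset Printing Implicit Defensive.
Local Open Scope ring_scope.

Lemma big_ord3 (V : nmodType) (F : 'I_3 -> V) :
  \sum_(j < 3) F j = F 0 + F 1 + F 2%:R.
Proof.
rewrite !big_ord_recr big_ord0 /= add0r.
by congr (F _ + F _ + F _); apply/val_inj.
Qed.

Lemma ord3P (j : 'I_3) : [\/ j = 0, j = 1 | j = 2%:R].
Proof.
by case: j => [[|[|[|//]]] ?]; [constructor 1|constructor 2|constructor 3]; apply/val_inj.
Qed.

Lemma det_mx33 (T : comNzRingType) (M : 'M[T]_3) : \det M =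
    M 0 0 * (M 1 1 * M 2%:R 2%:R - M 1 2%:R * M 2%:R 1)
  - M 0 1 * (M 1 0 * M 2%:R 2%:R - M 1 2%:R * M 2%:R 0)
  + M 0 2%:R * (M 1 0 * M 2%:R 1 - M 1 1 * M 2%:R 0).
Proof.
rewrite (expand_det_row _ 0) !big_ord_recr big_ord0 /= /cofactor.
rewrite !(expand_det_row _ 0) !big_ord_recr !big_ord0 /= /cofactor !det_mx11 !mxE /=.
set f := fun i j : nat => M (inord i) (inord j).
have E (i j : 'I_3) : M i j = f i j by rewrite /f !inord_val.
rewrite !E /=; ring.
Qed.

Definition principal_minors2 (T : comNzRingType) (M : 'M[T]_3) : T :=
  M 0 0 * M 1 1 - M 0 1 * M 1 0 + M 0 0 * M 2%:R 2%:R - M 0 2%:R * M 2%:R 0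
  + M 1 1 * M 2%:R 2%:R - M 1 2%:R * M 2%:R 1.

Lemma char_poly_mx33 (T : comNzRingType) (M : 'M[T]_3) : char_poly M =
  'X^3 - (\tr M)%:P * 'X^2 + (principal_minors2 M)%:P * 'X - (\det M)%:P.
Proof.
rewrite [\det M]det_mx33 /char_poly det_mx33 /char_poly_mx !mxE /=.
by rewrite /principal_minors2 /mxtrace big_ord3 !mulr1n !mulr0n; ring.
Qed.

Section Vectors.
Variable R : rcfType.
Implicit Types (u v x y : 'rV[R]_3).

Lemma dotE u v : dot u v = u 0 0 * v 0 0 + u 0 1 * v 0 1 + u 0 2%:R * v 0 2%:R.
Proof. by rewrite /dot big_ord3. Qed.

Lemma dot_ge0 u : 0 <= dot u u.
Proof. by rewrite dotE -!expr2 !addr_ge0 ?sqr_ge0. Qed.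

Lemma dot_cross_evec (i k : 'I_3) u :
  dot (cross (evec R i) u) (cross (evec R k) u) = (i == k)%:R * dot u u - u 0 i * u 0 k.
Proof.
by case: (ord3P i) => ->; case: (ord3P k) => ->; rewrite !dotE !mxE /=; ring.
Qed.

Lemma dot_cross_cross u v :
  dot (cross u v) (cross u v) = dot u u * dot v v - dot u v ^+ 2.
Proof. by rewrite !dotE !mxE /=; ring. Qed.

Lemma cross_shear u v (k : R) : cross u (k *: u + v) = cross u v.
Proof. by apply/rowP => i; case: (ord3P i) => ->; rewrite !mxE /=; ring. Qed.

Lemma dot_lincomb (s t : R) x y :
  dot (s *: x + t *: y) (s *: x + t *: y) =
  s ^+ 2 * dot x x + 2 * s * t * dot x y + t ^+ 2 * dot y y.
Proof. by rewrite !dotE !mxE; ring. Qed.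

Lemma char_poly_two_body (mu1 mu2 : R) x y :
  let J := mu1 * dot x x + mu2 * dot y y in
  char_poly (J%:M - (mu1 *: (x^T *m x) + mu2 *: (y^T *m y))) =
  ('X - J%:P) * ('X^2 - J%:P * 'X + (mu1 * mu2 * dot (cross x y) (cross x y))%:P).
Proof.
move=> J; set B := _ - _; set e := mu1 * mu2 * _.
have BE i k : B i k = (i == k)%:R * J - (mu1 * (x 0 i * x 0 k) + mu2 * (y 0 i * y 0 k)).
  by rewrite !mxE !big_ord1 !mxE mulr_natl.
have htr : \tr B = 2 * J by rewrite /mxtrace big_ord3 !BE /J !dotE /=; ring.
have hminor : principal_minors2 B = J ^+ 2 + e.
  by rewrite /principal_minors2 !BE /e /J dot_cross_cross !dotE /=; ring.
have hdet : \det B = J * e.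
  by rewrite det_mx33 !BE /e /J dot_cross_cross !dotE /=; ring.
by rewrite char_poly_mx33 htr hminor hdet; ring.
Qed.

Lemma area_ge0 (a : 'I_3 -> 'rV[R]_3) : 0 <= area a.
Proof. by rewrite /area divr_ge0 ?sqrtr_ge0. Qed.

Lemma inertia_ge0 (m : 'I_3 -> R) a : (forall j, 0 <= m j) -> 0 <= inertia m a.
Proof. by move=> m_ge0; apply: sumr_ge0 => j _; rewrite mulr_ge0 ?dot_ge0. Qed.

Lemma inertia_tensorE (m : 'I_3 -> R) a :
  inertia_tensor m a = (inertia m a)%:M - \sum_(j < 3) m j *: ((a j)^T *m a j).
Proof.
apply/matrixP => i k; rewrite !mxE summxE /inertia !big_ord3 !dot_cross_evec.
by rewrite !mxE !big_ord1 !mxE; ring.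
Qed.

End Vectors.

Lemma sorted_roots_eq (F : realFieldType) (s t : seq F) :
  sorted <=%R s -> sorted <=%R t ->
  \prod_(x <- s) ('X - x%:P) = \prod_(x <- t) ('X - x%:P) -> s = t.
Proof. by move=> s_sorted t_sorted /prod_XsubC_eq; apply: (sorted_eq le_trans le_anti). Qed.

Lemma double_eigenvalue_iff_discriminant (R : rcfType) (B : 'M[R]_3) (J e : R) :
  char_poly B = ('X - J%:P) * ('X^2 - J%:P * 'X + e%:P) ->
  0 <= e -> 4 * e <= J ^+ 2 -> 0 <= J ->
  (exists s, sorted_eigenvalues B s /\ s`_0 = s`_1) <-> J ^+ 2 = 4 * e.
Proof.
move=> B_char e_ge0 disc_ge0 J_ge0.
set d := Num.sqrt (J ^+ 2 - 4 * e).
have d_sqr : d ^+ 2 = J ^+ 2 - 4 * e by rewrite sqr_sqrtr // subr_ge0.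
have d_ge0 : 0 <= d := sqrtr_ge0 _.
have d_le_J : d <= J by rewrite -(ler_pXn2r (n := 2)) ?nnegrE // d_sqr; lra.
pose roots := [:: (J - d) / 2; (J + d) / 2; J].
have roots_sorted : sorted <=%R roots by rewrite /= andbT; apply/andP; split; lra.
have roots_char : char_poly B = \prod_(r <- roots) ('X - r%:P).
  have J_sum : J%:P = ((J - d) / 2)%:P + ((J + d) / 2)%:P by rewrite -polyCD; congr _%:P; field.
  have e_prod : e%:P = ((J - d) / 2)%:P * ((J + d) / 2)%:P.
    have -> : e = (J ^+ 2 - d ^+ 2) / 4 by rewrite d_sqr; field.
    by rewrite -polyCM; congr _%:P; field.
  by rewrite B_char !big_cons big_nil e_prod J_sum; ring.
rewrite /sorted_eigenvalues; split => [[s [[s_sorted s_char] s01]] | disc0].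
- have s_roots : s = roots by apply: sorted_roots_eq; rewrite // -s_char.
  have d0 : d = 0 by move: s01; rewrite s_roots /=; lra.
  by apply/eqP; rewrite -subr_eq0 -d_sqr sqrf_eq0 d0.
- have d0 : d = 0 by rewrite /d disc0 subrr sqrtr0.
  by exists roots; split; [split | rewrite /= d0 subr0 addr0].
Qed.

Section SqrtBound.
Variables (R : rcfType) (k d J : R).
Hypotheses (k_gt0 : 0 < k) (d_ge0 : 0 <= d) (J_ge0 : 0 <= J).

Let z_gt0 : 0 < 4 * Num.sqrt k.
Proof. by rewrite mulr_gt0 ?sqrtr_gt0. Qed.

Let sqr_scaled : 16 * k * d ^+ 2 = (d * (4 * Num.sqrt k)) ^+ 2.
Proof. by rewrite !exprMn sqr_sqrtr ?ltW //; ring. Qed.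

Let dz_ge0 : 0 <= d * (4 * Num.sqrt k).
Proof. exact: mulr_ge0 d_ge0 (ltW z_gt0). Qed.

Lemma ler_div_sqrt : (d <= J / (4 * Num.sqrt k)) = (16 * k * d ^+ 2 <= J ^+ 2).
Proof. by rewrite ler_pdivlMr // sqr_scaled ler_sqr ?nnegrE. Qed.

Lemma eqr_div_sqrt : (d == J / (4 * Num.sqrt k)) = (16 * k * d ^+ 2 == J ^+ 2).
Proof.
by rewrite !eq_le ler_pdivlMr // ler_pdivrMr // sqr_scaled !ler_sqr ?nnegrE.
Qed.

End SqrtBound.

Section JacobiCoordinates.
Variables (R : rcfType) (m : 'I_3 -> R) (a : 'I_3 -> 'rV[R]_3).
Hypotheses (m_gt0 : forall j, 0 < m j) (m_sum1 : \sum_(j < 3) m j = 1).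
Hypothesis a_centered : centered m a.

Let c := 1 - m 2%:R.
Let x := a 1 - a 0.
(* As the centre of mass is 0, [y] is [a 2] minus the centre of mass of [a 0] and [a 1]. *)
Let y := c^-1 *: a 2%:R.
Let mu1 := m 0 * m 1 / c.
Let mu2 := c * m 2%:R.

Let m0E : m 0 = 1 - m 1 - m 2%:R.
Proof. by rewrite -m_sum1 big_ord3; ring. Qed.

Let c_gt0 : 0 < c.
Proof. by have := m_gt0 0; have := m_gt0 1; rewrite m0E /c; lra. Qed.

Let c_neq0 : c != 0. Proof. exact: lt0r_neq0. Qed.

Let m012_gt0 : 0 < m 0 * m 1 * m 2%:R.
Proof. by rewrite !mulr_gt0. Qed.

Lemma jacobi_decomposition :
  [/\ a 0 = (- (m 1 / c)) *: x + (- m 2%:R) *: y,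
      a 1 = (m 0 / c) *: x + (- m 2%:R) *: y &
      a 2%:R = 0 *: x + c *: y].
Proof.
have centered_i i : m 0 * a 0 0 i + m 1 * a 1 0 i + m 2%:R * a 2%:R 0 i = 0.
  by have := congr1 (fun v : 'rV_3 => v 0 i) a_centered; rewrite /= summxE big_ord3 !mxE.
split; apply/rowP => i; rewrite !mxE; apply/eqP; rewrite -subr_eq0; apply/eqP;
  last by field.
all: rewrite -[RHS](mul0r c^-1) -(centered_i i).
all: by move: c_neq0; rewrite /c m0E => ?; field.
Qed.

Lemma area_jacobi : area a = vnorm (cross x y) / 2.
Proof.
have [a0E _ a2E] := jacobi_decomposition.
rewrite /area; have -> : a 2%:R - a 0 = (m 1 / c) *: x + y.
  rewrite [in LHS]a0E [in LHS]a2E; apply/rowP => i; rewrite !mxE.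
  by move: c_neq0; rewrite /c => ?; field.
by rewrite cross_shear.
Qed.

Lemma sqr_area : 4 * area a ^+ 2 = dot (cross x y) (cross x y).
Proof.
by rewrite area_jacobi /vnorm expr_div_n sqr_sqrtr ?dot_ge0 //; field.
Qed.

Lemma inertia_jacobi : inertia m a = mu1 * dot x x + mu2 * dot y y.
Proof.
have [a0E a1E a2E] := jacobi_decomposition.
rewrite /inertia big_ord3 a0E a1E a2E !dot_lincomb /mu1 /mu2.
by move: c_neq0; rewrite /c m0E => ?; field.
Qed.

Lemma second_moment_jacobi :
  \sum_(j < 3) m j *: ((a j)^T *m a j) = mu1 *: (x^T *m x) + mu2 *: (y^T *m y).
Proof.
have [a0E a1E a2E] := jacobi_decomposition.
rewrite big_ord3 a0E a1E a2E; apply/matrixP => i k; rewrite !mxE !big_ord1 !mxE /mu1 /mu2.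
by move: c_neq0; rewrite /c m0E => ?; field.
Qed.

Let mu1_mu2 : mu1 * mu2 = m 0 * m 1 * m 2%:R.
Proof. by rewrite /mu1 /mu2; field. Qed.

Lemma char_poly_inertia_tensor :
  char_poly (inertia_tensor m a) = ('X - (inertia m a)%:P) *
    ('X^2 - (inertia m a)%:P * 'X + (4 * (m 0 * m 1 * m 2%:R) * area a ^+ 2)%:P).
Proof.
rewrite inertia_tensorE second_moment_jacobi inertia_jacobi char_poly_two_body.
by rewrite -mu1_mu2 -sqr_area; congr (_ * (_ + _%:P)); ring.
Qed.

Let L := mu1 * dot x x - mu2 * dot y y.

Lemma inertia_discriminant :
  inertia m a ^+ 2 - 16 * (m 0 * m 1 * m 2%:R) * area a ^+ 2 =
  L ^+ 2 + 4 * (mu1 * mu2) * dot x y ^+ 2.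
Proof.
have -> : 16 * (m 0 * m 1 * m 2%:R) * area a ^+ 2 =
          4 * (m 0 * m 1 * m 2%:R) * (4 * area a ^+ 2) by ring.
by rewrite inertia_jacobi sqr_area dot_cross_cross -mu1_mu2 /L; ring.
Qed.

Let mu1_mu2_gt0 : 0 < mu1 * mu2.
Proof. by rewrite mu1_mu2. Qed.

Let cross_term_ge0 : 0 <= 4 * (mu1 * mu2) * dot x y ^+ 2.
Proof. by rewrite mulr_ge0 ?sqr_ge0 // mulr_ge0 // ltW. Qed.

Lemma area_sqr_le_inertia :
  16 * (m 0 * m 1 * m 2%:R) * area a ^+ 2 <= inertia m a ^+ 2.
Proof.
by rewrite -subr_ge0 inertia_discriminant addr_ge0 ?sqr_ge0.
Qed.

Let pole_defect j := m j * dot (a j) (a j) - (1 - m j) / 2 * inertia m a.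

Lemma pole_defectE :
  [/\ pole_defect 0 = (m 1 - m 0 * m 2%:R) / (2 * c) * L
                      + 2 * (m 0 * m 1 * m 2%:R) / c * dot x y,
      pole_defect 1 = (m 0 - m 1 * m 2%:R) / (2 * c) * L
                      - 2 * (m 0 * m 1 * m 2%:R) / c * dot x y &
      pole_defect 2%:R = - (c / 2) * L].
Proof.
have [a0E a1E a2E] := jacobi_decomposition.
rewrite /pole_defect inertia_jacobi a0E a1E a2E !dot_lincomb /L /mu1 /mu2.
by move: c_neq0; rewrite /c m0E => ?; split; field.
Qed.

Lemma pole_iff :
  (forall j, m j * dot (a j) (a j) = (1 - m j) / 2 * inertia m a) <->
  inertia m a ^+ 2 = 16 * (m 0 * m 1 * m 2%:R) * area a ^+ 2.
Proof.
have m012_neq0 : m 0 * m 1 * m 2%:R != 0 := lt0r_neq0 m012_gt0.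
have pole_defect0 j : (pole_defect j = 0) <-> m j * dot (a j) (a j) = (1 - m j) / 2 * inertia m a.
  by rewrite /pole_defect; split => [/subr0_eq | ->]; rewrite ?subrr.
have [d0E d1E d2E] := pole_defectE.
have disc0 : inertia m a ^+ 2 = 16 * (m 0 * m 1 * m 2%:R) * area a ^+ 2 <->
              L = 0 /\ dot x y = 0.
  split => [/eqP | [L0 xy0]]; last first.
    by apply/eqP; rewrite -subr_eq0 inertia_discriminant L0 xy0 expr0n /= mulr0 addr0.
  rewrite -subr_eq0 inertia_discriminant paddr_eq0 ?sqr_ge0 //.
  have k_neq0 : 4 * (mu1 * mu2) != 0 by rewrite mulf_neq0 ?lt0r_neq0.
  by rewrite sqrf_eq0 mulf_eq0 sqrf_eq0 (negbTE k_neq0) => /andP[/eqP ? /eqP ?].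
apply: (iff_trans _ (iff_sym disc0)).
have mulf0_eq0 (k t : R) : k != 0 -> k * t = 0 -> t = 0.
  by move=> /negbTE k_neq0 /eqP; rewrite mulf_eq0 k_neq0 => /eqP.
split => [pole | [L0 xy0] j].
- have L0 : L = 0.
    apply: (@mulf0_eq0 (- (c / 2))); first by rewrite oppr_eq0 mulf_neq0 ?invr_eq0 ?pnatr_eq0.
    by rewrite -d2E; apply/pole_defect0.
  split=> //; apply: (@mulf0_eq0 (2 * (m 0 * m 1 * m 2%:R) / c)).
    by rewrite mulf_neq0 ?invr_eq0 // mulf_neq0 ?pnatr_eq0.
  by move/pole_defect0: (pole 0); rewrite d0E L0 mulr0 add0r.
- by apply/pole_defect0; case: (ord3P j) => ->; rewrite ?d0E ?d1E ?d2E L0 ?xy0; ring.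
Qed.

Lemma double_eigenvalue_iff :
  (exists s, sorted_eigenvalues (inertia_tensor m a) s /\ s`_0 = s`_1) <->
  inertia m a ^+ 2 = 16 * (m 0 * m 1 * m 2%:R) * area a ^+ 2.
Proof.
have quad : 4 * (4 * (m 0 * m 1 * m 2%:R) * area a ^+ 2) =
            16 * (m 0 * m 1 * m 2%:R) * area a ^+ 2 by ring.
rewrite -quad; apply: double_eigenvalue_iff_discriminant char_poly_inertia_tensor _ _ _.
- by rewrite mulr_ge0 ?sqr_ge0 // mulr_ge0 // ltW.
- by rewrite quad area_sqr_le_inertia.
- exact: inertia_ge0 (fun j => ltW (m_gt0 j)).
Qed.

End JacobiCoordinates.

Theorem mainTheorem13 (R : rcfType) (m : 'I_3 -> R) (a : 'I_3 -> 'rV[R]_3) :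
  (forall j, 0 < m j) -> \sum_(j < 3) m j = 1 ->
  centered m a ->
  (exists j, a j != 0) ->
  area a != 0 ->
  let I := inertia m a in
  let Dmax := I / (4 * Num.sqrt (m 0 * m 1 * m 2%:R)) in
  (* (a) pole  <->  (b) lambda_1 = lambda_2 *)
  ((forall j, m j * dot (a j) (a j) = (1 - m j) / 2 * I) <->
   (exists s, sorted_eigenvalues (inertia_tensor m a) s /\ s`_0 = s`_1)) /\
  (* (b) <-> (c) area equals Delta_max *)
  ((exists s, sorted_eigenvalues (inertia_tensor m a) s /\ s`_0 = s`_1) <->
   area a = Dmax) /\
  (* Delta_max is the maximal area among m-triangles with the same I *)
  (forall b : 'I_3 -> 'rV[R]_3, centered m b -> inertia m b = I -> area b <= Dmax).
Proof.
(* The equivalences hold for degenerate m-triangles as well. *)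
move=> m_gt0 m_sum1 a_centered _ _ I Dmax.
have m012_gt0 : 0 < m 0 * m 1 * m 2%:R by rewrite !mulr_gt0.
have I_ge0 : 0 <= I := inertia_ge0 a (fun j => ltW (m_gt0 j)).
have double_eig := double_eigenvalue_iff m_gt0 m_sum1 a_centered.
split; [|split].
- exact: iff_trans (pole_iff m_gt0 m_sum1 a_centered) (iff_sym double_eig).
- apply: (iff_trans double_eig).
  have area_max := eqr_div_sqrt m012_gt0 (area_ge0 a) I_ge0.
  by split => [disc | /eqP]; [apply/eqP; rewrite area_max -disc | rewrite area_max => /eqP <-].
- move=> b b_centered b_I.
  by rewrite ler_div_sqrt ?area_ge0 // -b_I area_sqr_le_inertia.
Qed.
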